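(* Let $L=2$, assume $\min\{d_1\}\ge d_{\min}$ (i.e., $d_1\ge\min\{d_0,d_2\}$), and suppose $\lambda=y_i^2$ for some $i\in[r_Y]$. Then for every $\bm\sigma^*\in\mathcal A$, there do not exist constants $\epsilon,\kappa>0$ such that $\mathrm{dist}(\bm W,\widehat{\mathcal W}_{\bm\sigma^*})\le\kappa\|\nabla G(\bm W)\|_F$ holds for all $\bm W$ with $\mathrm{dist}(\bm W,\widehat{\mathcal W}_{\bm\sigma^*})\le\epsilon$.
   Context: Setting: $d_0,d_1,d_2$ positive integers, $d_{\min}=\min\{d_0,d_2\}$, $\lambda>0$, $\bm Y\in\mathbb R^{d_2\times d_0}$ diagonal with entries $y_1\ge\dots\ge y_{d_{\min}}\ge0$, $r_Y$ the number of positive $y_i$, $G(\bm W_1,\bm W_2)=\|\bm W_2\bm W_1-\sqrt\lambda\bm Y\|_F^2+\lambda(\|\bm W_1\|_F^2+\|\bm W_2\|_F^2)$. $\mathcal A=\{\bm a\in\mathbb R^{d_{\min}}:a_i^3-\sqrt\lambda y_ia_i+\lambda a_i=0,a_i\ge0\ \forall i\}$. For $\bm\sigma^*\in\mathcal A$, $\widehat{\mathcal W}_{\bm\sigma^*}:=\mathcal W_{\mathrm{sort}(\bm\sigma^* )}$, where $\mathrm{sort}$ rearranges entries in nonincreasing order and, for $\bm\sigma$ nonincreasing with $\bm\sigma=\bm\Pi\bm a$, $\bm a\in\mathcal A$, $\bm\Pi$ a permutation matrix, $\mathcal W_{\bm\sigma}$ is the set of pairs $\bm W_1=\bm Q_2\bm\Sigma_1\mathrm{BlkD}(\bm\Pi,\bm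 I)\mathrm{BlkD}(\bm O_1,\dots,\bm O_{p_Y+1})$, $\bm W_2=\mathrm{BlkD}(\bm O_1^T,\dots,\bm O_{p_Y}^T,\widehat{\bm O}_{p_Y+1}^T)\mathrm{BlkD}(\bm\Pi^T,\bm I)\bm\Sigma_2\bm Q_2^T$, with $\bm\Sigma_l\in\mathbb R^{d_l\times d_{l-1}}$ having top-left block $\mathrm{diag}(\bm\sigma)$ and zeros elsewhere, and $\bm Q_2\in\mathcal O^{d_1}$, $\bm O_k\in\mathcal O^{h_k}$ ($h_k$ the multiplicities of the $p_Y$ distinct positive $y$-values), $\bm O_{p_Y+1}\in\mathcal O^{d_0-r_Y}$, $\widehat{\bm O}_{p_Y+1}\in\mathcal O^{d_2-r_Y}$ arbitrary orthogonal matrices. Distances/gradient norms are Frobenius norms on tuples. *)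

From HB Require Import structures.
From mathcomp Require Import all_boot all_order all_algebra all_fingroup.
From mathcomp Require Import all_classical all_reals all_analysis.
Set Implicit Arguments. Unset Strict Implicit. Unset Printing Implicit Defensive.
Import Order.TTheory GRing.Theory Num.Theory.
Local Open Scope classical_set_scope.
Local Open Scope ring_scope.

Section Defs.
Variable R : realType.

Definition frob2 (m n : nat) (A : 'M[R]_(m, n)) : R :=
  \sum_(i < m) \sum_(j < n) A i j ^+ 2.

(* read a finite vector v : 'I_n -> R at a natural index (0 outside range) *)
Definition ofnat (n : nat) (v : 'I_n -> R) (k : nat) : R :=
  oapp v 0 (insub k : option 'I_n).

Definition rdiag (n m p : nat) (v : 'I_n -> R) : 'M[R]_(m, p) :=
  \matrix_(i < m, j < p) (if val i == val j then ofnat v i else 0).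

Definition Ymat (d0 d2 : nat) (y : 'I_(minn d0 d2) -> R) : 'M[R]_(d2, d0) :=
  rdiag d2 d0 y.

Definition Gobj (d0 d1 d2 : nat) (lam : R) (y : 'I_(minn d0 d2) -> R)
  (W1 : 'M[R]_(d1, d0)) (W2 : 'M[R]_(d2, d1)) : R :=
  frob2 (W2 *m W1 - Num.sqrt lam *: Ymat y) + lam * (frob2 W1 + frob2 W2).

Definition inA (n : nat) (lam : R) (y a : 'I_n -> R) : Prop :=
  forall i, a i ^+ 3 - Num.sqrt lam * y i * a i + lam * a i = 0 /\ 0 <= a i.

Definition rY (n : nat) (y : 'I_n -> R) : nat := #|[set i | 0 < y i]|.

(* i, j (indices of a k x k matrix) lie in the same diagonal block of
   BlkD(O_1, ..., O_{p_Y}, O_{p_Y+1}): same positive y-value, or both >= r_Y *)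
Definition sameblk (n : nat) (y : 'I_n -> R) (k : nat) (i j : 'I_k) : bool :=
  if ((val i < rY y) && (val j < rY y))%N then ofnat y i == ofnat y j
  else ((rY y <= val i) && (rY y <= val j))%N.

Definition orthmx (k : nat) (O : 'M[R]_k) : Prop := O *m O^T = 1%:M.

Definition blkshape (n : nat) (y : 'I_n -> R) (k : nat) (O : 'M[R]_k) : Prop :=
  forall i j, ~~ sameblk y i j -> O i j = 0.

(* BlkD(Pi, I) in R^{k x k}, Pi = perm_mx s the n x n permutation matrix *)
Definition blkperm (n k : nat) (s : 'S_n) : 'M[R]_k :=
  \matrix_(i < k, j < k)
    match (insub (val i) : option 'I_n), (insub (val j) : option 'I_n) with
    | Some i', Some j' => (perm_mx s : 'M[R]_n) i' j'
    | _, _ => (val i == val j)%:R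
    end.

(* W_sigma (union over all admissible a in A and permutations Pi with sigma = Pi a) *)
Definition Wset (d0 d1 d2 : nat) (lam : R) (y : 'I_(minn d0 d2) -> R)
  (sigma : 'I_(minn d0 d2) -> R) : set ('M[R]_(d1, d0) * 'M[R]_(d2, d1)) :=
  [set W | exists (a : 'I_(minn d0 d2) -> R) (s : 'S_(minn d0 d2))
             (Q2 : 'M[R]_d1) (O0 : 'M[R]_d0) (O2 : 'M[R]_d2),
      [/\ inA lam y a /\ \col_i sigma i = perm_mx s *m \col_i a i,
          [/\ orthmx Q2, orthmx O0, orthmx O2, blkshape y O0 & blkshape y O2],
          (forall (i j : 'I_d0) (k l : 'I_d2), val i = val k -> val j = val l ->
              (val i < rY y)%N -> (val j < rY y)%N -> O0 i j = O2 k l),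
          W.1 = Q2 *m rdiag d1 d0 sigma *m blkperm d0 s *m O0 &
          W.2 = O2^T *m (blkperm d2 s)^T *m rdiag d2 d1 sigma *m Q2^T]].

Definition sortdesc (n : nat) (a : 'I_n -> R) : 'I_n -> R :=
  fun i => nth 0 (sort (fun x y : R => y <= x) [seq a j | j <- enum 'I_n]) i.

Definition What (d0 d1 d2 : nat) (lam : R) (y : 'I_(minn d0 d2) -> R)
  (sigma : 'I_(minn d0 d2) -> R) := Wset (d1 := d1) lam y (sortdesc sigma).

Definition distW (m0 m1 m2 : nat) (W : 'M[R]_(m1, m0) * 'M[R]_(m2, m1))
  (S : set ('M[R]_(m1, m0) * 'M[R]_(m2, m1))) : R :=
  inf [set Num.sqrt (frob2 (W.1 - V.1) + frob2 (W.2 - V.2)) | V in S].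

Definition gradnormG (d0 d1 d2 : nat) (lam : R) (y : 'I_(minn d0 d2) -> R)
  (W : 'M[R]_(d1, d0) * 'M[R]_(d2, d1)) : R :=
  Num.sqrt (
    \sum_(i < d1) \sum_(j < d0)
       (derive1 (fun t : R => Gobj lam y (W.1 + t *: delta_mx i j) W.2) 0) ^+ 2
  + \sum_(i < d2) \sum_(j < d1)
       (derive1 (fun t : R => Gobj lam y W.1 (W.2 + t *: delta_mx i j)) 0) ^+ 2).

End Defs.

From HB Require Import structures.
From mathcomp Require Import all_boot all_order all_algebra all_fingroup.
From mathcomp Require Import all_classical all_reals all_analysis.
From mathcomp Require Import ring lra.
Set Implicit Arguments. Unset Strict Implicit. Unset Printing Implicit Defensive.
Import Order.TTheory GRing.Theory Num.Theory.
Local Open Scope classical_set_scope.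
Local Open Scope ring_scope.

(* When [lam = y_i ^+ 2], the cubic defining [inA] reduces at coordinate [i] to
   [a_i ^+ 3 = 0], so every critical point has a zero singular value there and [G]
   is flat to third order in that direction.  Perturb the sorted critical point by
   [t] along it: the gradient of [G] grows only like [t ^+ 3], whereas every point
   of the critical set has the same [frob2 W1 = \sum_i sigma_i ^+ 2] and the
   perturbation raises it by [t ^+ 2], which keeps the point at distance of order
   [t ^+ 2] from the set.  For small [t] no error bound
   [dist <= kappa * |grad G|] can hold. *)

Section Frobenius.
Variable R : realType.

Definition frob_dot m p (A B : 'M[R]_(m, p)) : R :=
  \sum_(i < m) \sum_(j < p) A i j * B i j.

Lemma frob_dot_trace m p (A B : 'M[R]_(m, p)) : frob_dot A B = \tr (A *m B^T).
Proof.
rewrite /frob_dot /mxtrace; apply: eq_bigr => i _; rewrite mxE.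
by apply: eq_bigr => j _; rewrite mxE.
Qed.

Lemma frob2_dot m p (A : 'M[R]_(m, p)) : frob2 A = frob_dot A A.
Proof. by apply: eq_bigr => i _; apply: eq_bigr => j _; rewrite expr2. Qed.

Lemma frob2_ge0 m p (A : 'M[R]_(m, p)) : 0 <= frob2 A.
Proof. by apply: sumr_ge0 => i _; apply: sumr_ge0 => j _; apply: sqr_ge0. Qed.

Lemma frob_dotDZl m p c (A B D : 'M[R]_(m, p)) :
  frob_dot (A + c *: B) D = frob_dot A D + c * frob_dot B D.
Proof.
rewrite /frob_dot mulr_sumr -big_split /=; apply: eq_bigr => i _.
rewrite mulr_sumr -big_split /=; apply: eq_bigr => j _; rewrite !mxE; ring.
Qed.

Lemma frob2DZ m p t (A B : 'M[R]_(m, p)) :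
  frob2 (A + t *: B) = frob2 A + 2 * frob_dot A B * t + frob2 B * t ^+ 2.
Proof.
rewrite /frob2 /frob_dot mulr_sumr !mulr_suml -!big_split /=; apply: eq_bigr => i _.
rewrite mulr_sumr !mulr_suml -!big_split /=; apply: eq_bigr => j _; rewrite !mxE; ring.
Qed.

Lemma frob2D m p (A B : 'M[R]_(m, p)) :
  frob2 (A + B) = frob2 A + 2 * frob_dot A B + frob2 B.
Proof. by have := frob2DZ 1 A B; rewrite scale1r expr1n !mulr1. Qed.

Lemma frob_dot_delta m p (A : 'M[R]_(m, p)) i j : frob_dot A (delta_mx i j) = A i j.
Proof.
rewrite /frob_dot (bigD1 i) //= (bigD1 j) //= !mxE !eqxx mulr1.
rewrite big1 => [|l lj]; last by rewrite mxE eqxx (negbTE lj) mulr0.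
rewrite big1 ?addr0 // => k ki.
by apply: big1 => l _; rewrite mxE (negbTE ki) mulr0.
Qed.

Lemma frob_dot_mulmxl m k p (A : 'M[R]_(m, p)) (B : 'M[R]_(m, k)) C :
  frob_dot A (B *m C) = frob_dot (B^T *m A) C.
Proof. by rewrite !frob_dot_trace trmx_mul mulmxA mxtrace_mulC mulmxA. Qed.

Lemma frob_dot_mulmxr m k p (A : 'M[R]_(m, p)) (B : 'M[R]_(m, k)) C :
  frob_dot A (B *m C) = frob_dot (A *m C^T) B.
Proof. by rewrite !frob_dot_trace trmx_mul mulmxA. Qed.

Lemma frob2_orthmxl m p (Q : 'M[R]_m) (A : 'M[R]_(m, p)) :
  orthmx Q -> frob2 (Q *m A) = frob2 A.
Proof.
move=> /mulmx1C QtQ; rewrite !frob2_dot !frob_dot_trace trmx_mul.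
by rewrite !mulmxA mxtrace_mulC !mulmxA QtQ mul1mx.
Qed.

Lemma frob2_orthmxr m p (O : 'M[R]_p) (A : 'M[R]_(m, p)) :
  orthmx O -> frob2 (A *m O) = frob2 A.
Proof.
move=> OOt; rewrite !frob2_dot !frob_dot_trace trmx_mul.
by rewrite -mulmxA (mulmxA O) OOt mul1mx.
Qed.

Lemma frob_dot_amgm m p a b (A B : 'M[R]_(m, p)) :
  2 * a * b * frob_dot A B <= a ^+ 2 * frob2 A + b ^+ 2 * frob2 B.
Proof.
rewrite /frob_dot /frob2 !mulr_sumr -big_split /=; apply: ler_sum => i _.
rewrite !mulr_sumr -big_split /=; apply: ler_sum => j _.
have := sqr_ge0 (a * A i j - b * B i j); nra.
Qed.

Lemma frob2_norm_gap m p (B D : 'M[R]_(m, p)) (tau : R) :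
  frob2 (B + D) = frob2 B + tau -> 0 <= tau ->
  tau ^+ 2 <= (2 * tau + 4 * (frob2 B + 1)) * frob2 D.
Proof.
move=> BD tau_ge0; rewrite frob2D in BD.
have := frob_dot_amgm tau (2 * (frob2 B + 1)) B D.
have := frob2_ge0 B; have := frob2_ge0 D.
set c := frob2 B in BD *; set d := frob2 D in BD *; set q := frob_dot B D in BD *.
move=> d_ge0 c_ge0 amgm.
have tauE : tau = 2 * q + d by lra.
have key : tau ^+ 2 * (c + 2) <= (c + 1) * ((2 * tau + 4 * (c + 1)) * d).
  rewrite tauE in amgm *; nra.
have : tau ^+ 2 * (c + 1) <= (c + 1) * ((2 * tau + 4 * (c + 1)) * d).
  by apply: le_trans key; rewrite ler_wpM2l ?sqr_ge0 //; lra.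
by rewrite mulrC ler_pM2l //; lra.
Qed.

End Frobenius.

Section DiagonalBlocks.
Variable R : realType.

Lemma ofnat_ord n (v : 'I_n -> R) (i : 'I_n) : ofnat v i = v i.
Proof. by rewrite /ofnat valK. Qed.

Lemma ofnat_lt n (v : 'I_n -> R) k (k_lt_n : (k < n)%N) : ofnat v k = v (Ordinal k_lt_n).
Proof. by rewrite /ofnat (insubT (fun x => (x < n)%N) k_lt_n). Qed.

Lemma ofnat_oob n (v : 'I_n -> R) k : (n <= k)%N -> ofnat v k = 0.
Proof. by move=> n_le_k; rewrite /ofnat insubN // -leqNgt. Qed.

Lemma ofnat_map2 n (f : R -> R -> R) (u v : 'I_n -> R) k : f 0 0 = 0 ->
  ofnat (fun i => f (u i) (v i)) k = f (ofnat u k) (ofnat v k).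
Proof. by move=> f00; rewrite /ofnat; case: insubP. Qed.

Lemma rdiagD n m p (u v : 'I_n -> R) :
  rdiag m p (fun i => u i + v i) = rdiag m p u + rdiag m p v.
Proof.
apply/matrixP => i j; rewrite !mxE; case: eqP => _; last by rewrite addr0.
by rewrite (@ofnat_map2 n +%R) ?addr0.
Qed.

Lemma rdiagB n m p (u v : 'I_n -> R) :
  rdiag m p (fun i => u i - v i) = rdiag m p u - rdiag m p v.
Proof.
apply/matrixP => i j; rewrite !mxE; case: eqP => _; last by rewrite subr0.
by rewrite (@ofnat_map2 n (fun a b => a - b)) ?subr0.
Qed.

Lemma rdiagZ n m p c (u : 'I_n -> R) :
  rdiag m p (fun i => c * u i) = c *: rdiag m p u.
Proof.
apply/matrixP => i j; rewrite !mxE; case: eqP => _; last by rewrite mulr0.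
by rewrite (@ofnat_map2 n (fun _ b => c * b) u u) ?mulr0.
Qed.

Lemma tr_rdiag n m p (u : 'I_n -> R) : (rdiag m p u)^T = rdiag p m u.
Proof. by apply/matrixP => i j; rewrite !mxE eq_sym; case: eqP => // ->. Qed.

Lemma mul_rdiag n m p q (u v : 'I_n -> R) : (n <= p)%N ->
  rdiag m p u *m rdiag p q v = rdiag m q (fun i => u i * v i).
Proof.
move=> n_le_p; apply/matrixP => i j; rewrite !mxE.
rewrite (@ofnat_map2 n *%R) ?mulr0 //.
have [i_lt_p|p_le_i] := ltnP i p; last first.
  have u0 : ofnat u i = 0 by rewrite ofnat_oob ?(leq_trans n_le_p p_le_i).
  rewrite u0 mul0r if_same.
  by apply: big1 => k _; rewrite !mxE; case: eqP => _; rewrite ?u0 ?mul0r.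
rewrite (bigD1 (Ordinal i_lt_p)) //= big1 => [|k k_neq]; last first.
  rewrite !mxE; case: eqP => [ik|]; last by rewrite mul0r.
  by move: k_neq; rewrite -val_eqE /= ik eqxx.
by rewrite !mxE eqxx addr0 /=; case: eqP => _; rewrite ?mulr0.
Qed.

Lemma frob2_rdiag n m p (v : 'I_n -> R) : (n <= m)%N -> (n <= p)%N ->
  frob2 (rdiag m p v) = \sum_(i < n) v i ^+ 2.
Proof.
move=> n_le_m n_le_p.
transitivity (\sum_(i < m) ofnat v i ^+ 2).
  apply: eq_bigr => i _; have [i_lt_n|n_le_i] := ltnP i n; last first.
    rewrite ofnat_oob // expr0n /=; apply: big1 => j _; rewrite !mxE.
    by case: eqP => _; rewrite ?ofnat_oob // expr0n.
  rewrite (bigD1 (Ordinal (leq_trans i_lt_n n_le_p))) //= big1 => [|k k_neq].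
    by rewrite !mxE eqxx addr0.
  rewrite !mxE; case: eqP => [ik|]; last by rewrite expr0n.
  by move: k_neq; rewrite -val_eqE /= ik eqxx.
rewrite (eq_bigr (fun i : 'I_n => ofnat v i ^+ 2)) => [|i _]; last by rewrite ofnat_ord.
rewrite (big_ord_widen m (fun k => ofnat v k ^+ 2) n_le_m) [RHS]big_mkcond /=.
by apply: eq_bigr => i _; case: ltnP => // i_n; rewrite ofnat_oob // expr0n.
Qed.

End DiagonalBlocks.

Section BlockPermutation.
Variable R : realType.
Variables (n k : nat) (s : 'S_n).
Hypothesis n_le_k : (n <= k)%N.

Definition ext_perm_fun (i : 'I_k) : 'I_k :=
  match insub (val i) : option 'I_n with
  | Some i' => odflt i (insub (val (s i')))
  | None => i
  end.

Lemma ext_perm_fun_lt (i : 'I_k) (i_lt_n : (i < n)%N) :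
  nat_of_ord (ext_perm_fun i) = s (Ordinal i_lt_n).
Proof.
rewrite /ext_perm_fun; case: insubP => [i' _ i'E|]; last by rewrite i_lt_n.
have -> : i' = Ordinal i_lt_n by apply: val_inj.
by case: insubP => [//|]; rewrite (leq_trans (ltn_ord _) n_le_k).
Qed.

Lemma ext_perm_fun_ge (i : 'I_k) : (n <= i)%N -> ext_perm_fun i = i.
Proof. by move=> n_le_i; rewrite /ext_perm_fun insubN // -leqNgt. Qed.

Lemma ext_perm_fun_inj : injective ext_perm_fun.
Proof.
have low_neq_high (i j : 'I_k) (i_lt_n : (i < n)%N) : (n <= j)%N -> ext_perm_fun i != j.
  move=> n_le_j; apply/eqP => ij.
  by move: n_le_j; rewrite -ij (ext_perm_fun_lt i_lt_n) leqNgt ltn_ord.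
move=> i j; have [i_n|n_i] := ltnP i n; have [j_n|n_j] := ltnP j n.
- by move/(congr1 (@nat_of_ord k)); rewrite !ext_perm_fun_lt => /val_inj/perm_inj [] /val_inj.
- by rewrite (ext_perm_fun_ge n_j) => ij; move: (low_neq_high i j i_n n_j); rewrite ij eqxx.
- by rewrite (ext_perm_fun_ge n_i) => ij; move: (low_neq_high j i j_n n_i); rewrite -ij eqxx.
- by rewrite !ext_perm_fun_ge.
Qed.

Definition ext_perm : 'S_k := perm ext_perm_fun_inj.

Lemma blkperm_perm_mx : blkperm R k s = perm_mx ext_perm.
Proof.
apply/matrixP => i j; rewrite [RHS]mxE [RHS]mxE permE /blkperm mxE.
have [i_n|n_i] := ltnP i n; last by rewrite insubN -?leqNgt //= ext_perm_fun_ge.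
rewrite (insubT (fun x => (x < n)%N) i_n) /= -val_eqE /= (ext_perm_fun_lt i_n).
have [j_n|n_j] := ltnP j n.
  by rewrite (insubT (fun x => (x < n)%N) j_n) /= !mxE.
rewrite insubN -?leqNgt //= ltn_eqF ?(leq_trans i_n n_j) //.
by rewrite ltn_eqF // (leq_trans (ltn_ord _) n_j).
Qed.

Lemma blkperm_orthmx : orthmx (blkperm R k s).
Proof. by rewrite /orthmx blkperm_perm_mx tr_perm_mx -perm_mxM mulgV perm_mx1. Qed.

Lemma tr_blkperm_orthmx : orthmx (blkperm R k s)^T.
Proof. by rewrite /orthmx trmxK; apply: mulmx1C; apply: blkperm_orthmx. Qed.

Lemma frob2_mulmx_blkperm m (A : 'M[R]_(m, k)) : frob2 (A *m blkperm R k s) = frob2 A.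
Proof. exact/frob2_orthmxr/blkperm_orthmx. Qed.

Lemma frob2_tr_blkperm_mulmx m (A : 'M[R]_(k, m)) : frob2 ((blkperm R k s)^T *m A) = frob2 A.
Proof. exact/frob2_orthmxl/tr_blkperm_orthmx. Qed.

End BlockPermutation.

Lemma rdiag_comp_perm (R : realType) n k2 k0 (s : 'S_n) (v : 'I_n -> R)
    (i : 'I_k2) (j : 'I_k0) : (n <= k2)%N -> (n <= k0)%N ->
  rdiag k2 k0 (fun x => v (s x)) i j =
  rdiag k2 k0 v (ext_perm_fun s i) (ext_perm_fun s j).
Proof.
move=> n_k2 n_k0; rewrite !mxE /=; have [i_n|n_i] := ltnP i n; last first.
  by rewrite ext_perm_fun_ge // !ofnat_oob // !if_same.
rewrite (ext_perm_fun_lt s n_k2 i_n) ofnat_ord (ofnat_lt _ i_n).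
have [j_n|n_j] := ltnP j n.
  by rewrite (ext_perm_fun_lt s n_k0 j_n) val_eqE (inj_eq perm_inj) -val_eqE.
rewrite ext_perm_fun_ge // ltn_eqF ?(leq_trans i_n n_j) //.
by rewrite ltn_eqF // (leq_trans (ltn_ord _) n_j).
Qed.

Lemma rdiag_perm_conj (R : realType) n k2 k0 (s : 'S_n) (v : 'I_n -> R) :
  (n <= k2)%N -> (n <= k0)%N ->
  (blkperm R k2 s)^T *m rdiag k2 k0 (fun i => v (s i)) *m blkperm R k0 s = rdiag k2 k0 v.
Proof.
move=> n_k2 n_k0; rewrite (blkperm_perm_mx R s n_k2) (blkperm_perm_mx R s n_k0).
rewrite tr_perm_mx -row_permE -[ext_perm s n_k0]invgK -col_permE.
apply/matrixP => i j; rewrite [LHS]mxE [LHS]mxE rdiag_comp_perm //.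
have ext_permK k (n_k : (n <= k)%N) x : ext_perm_fun s ((ext_perm s n_k)^-1%g x) = x.
  by have := permKV (ext_perm s n_k) x; rewrite permE.
by rewrite !ext_permK.
Qed.

Lemma derive1_quadratic (R : realType) (a b c : R) :
  derive1 (fun t : R => a + b * t + c * t ^+ 2) 0 = b.
Proof.
by rewrite derive1E derive_val add0r mul1r !scale0r addr0 scaler0 addr0 [LHS]mulr1.
Qed.

Section Gradient.
Variable R : realType.
Variables (d0 d1 d2 : nat) (lam : R) (y : 'I_(minn d0 d2) -> R).

Definition residual (W1 : 'M[R]_(d1, d0)) (W2 : 'M[R]_(d2, d1)) : 'M[R]_(d2, d0) :=
  W2 *m W1 - Num.sqrt lam *: Ymat y.

Lemma derive1_Gobj_fst W1 W2 (D : 'M[R]_(d1, d0)) :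
  derive1 (fun t => Gobj lam y (W1 + t *: D) W2) 0 =
  2 * frob_dot (W2^T *m residual W1 W2 + lam *: W1) D.
Proof.
have -> : (fun t => Gobj lam y (W1 + t *: D) W2) = fun t =>
    Gobj lam y W1 W2
    + (2 * frob_dot (residual W1 W2) (W2 *m D) + lam * (2 * frob_dot W1 D)) * t
    + (frob2 (W2 *m D) + lam * frob2 D) * t ^+ 2.
  apply: funext => t; rewrite /Gobj mulmxDr -scalemxAr addrAC.
  by rewrite -/(residual W1 W2) !frob2DZ; ring.
by rewrite derive1_quadratic frob_dot_mulmxl frob_dotDZl; ring.
Qed.

Lemma derive1_Gobj_snd W1 W2 (D : 'M[R]_(d2, d1)) :
  derive1 (fun t => Gobj lam y W1 (W2 + t *: D)) 0 =
  2 * frob_dot (residual W1 W2 *m W1^T + lam *: W2) D.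
Proof.
have -> : (fun t => Gobj lam y W1 (W2 + t *: D)) = fun t =>
    Gobj lam y W1 W2
    + (2 * frob_dot (residual W1 W2) (D *m W1) + lam * (2 * frob_dot W2 D)) * t
    + (frob2 (D *m W1) + lam * frob2 D) * t ^+ 2.
  apply: funext => t; rewrite /Gobj mulmxDl -scalemxAl addrAC.
  by rewrite -/(residual W1 W2) !frob2DZ; ring.
by rewrite derive1_quadratic frob_dot_mulmxr frob_dotDZl; ring.
Qed.

Lemma gradnormG_residual W1 W2 :
  gradnormG lam y (W1, W2) =
  Num.sqrt (4 * frob2 (W2^T *m residual W1 W2 + lam *: W1)
          + 4 * frob2 (residual W1 W2 *m W1^T + lam *: W2)).
Proof.
rewrite /gradnormG /frob2 !mulr_sumr /=; congr (Num.sqrt (_ + _));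
  apply: eq_bigr => i _; rewrite mulr_sumr; apply: eq_bigr => j _.
  by rewrite derive1_Gobj_fst frob_dot_delta; ring.
by rewrite derive1_Gobj_snd frob_dot_delta; ring.
Qed.

End Gradient.

Section DiagonalPoints.
Variable R : realType.
Variables (d0 d1 d2 : nat).
Local Notation n := (minn d0 d2).
Hypothesis n_le_d1 : (n <= d1)%N.
Let n_le_d0 : (n <= d0)%N := geq_minl d0 d2.
Let n_le_d2 : (n <= d2)%N := geq_minr d0 d2.

Definition diagW (phi : 'I_n -> R) (s : 'S_n) : 'M[R]_(d1, d0) * 'M[R]_(d2, d1) :=
  (rdiag d1 d0 phi *m blkperm R d0 s, (blkperm R d2 s)^T *m rdiag d2 d1 phi).

Lemma frob2_diagW_fst phi s : frob2 (diagW phi s).1 = \sum_i phi i ^+ 2.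
Proof. by rewrite frob2_mulmx_blkperm // frob2_rdiag. Qed.

Lemma frob2_diagW_sub u v s :
  frob2 ((diagW u s).1 - (diagW v s).1) + frob2 ((diagW u s).2 - (diagW v s).2) =
  2 * \sum_i (u i - v i) ^+ 2.
Proof.
rewrite /= -mulmxBl -mulmxBr -!rdiagB.
rewrite frob2_mulmx_blkperm // frob2_tr_blkperm_mulmx //.
by rewrite !frob2_rdiag //; ring.
Qed.

Lemma diagW_in_Wset lam (y a : 'I_n -> R) (s : 'S_n) : inA lam y a ->
  Wset (d1 := d1) lam y (fun i => a (s i)) (diagW (fun i => a (s i)) s).
Proof.
move=> aA; exists a, s, 1%:M, 1%:M, 1%:M; split.
- by split => //; apply/matrixP => i j; rewrite -row_permE !mxE.
- split; rewrite /orthmx ?trmx1 ?mulmx1 // => i j; rewrite mxE;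
    by case: (i =P j) => [<-|//]; rewrite /sameblk eqxx andbb; case: ltnP.
- by move=> i j k l /= ik jl _ _; rewrite !mxE -val_eqE -[k == l]val_eqE /= ik jl.
- by rewrite mul1mx mulmx1.
- by rewrite !trmx1 mul1mx mulmx1.
Qed.

Lemma Wset_frob2_fst lam (y sig : 'I_n -> R) V :
  Wset (d1 := d1) lam y sig V -> frob2 V.1 = \sum_i sig i ^+ 2.
Proof.
move=> [a [s [Q2 [U0 [U2 [_ [oQ2 oU0 _ _ _] _ -> _]]]]]].
by rewrite frob2_orthmxr // frob2_mulmx_blkperm // frob2_orthmxl // frob2_rdiag.
Qed.

Lemma gradnormG_diagW lam (y phi : 'I_n -> R) (s : 'S_n) :
  gradnormG lam y (diagW phi s) =
  Num.sqrt (8 * \sum_i (phi i ^+ 3 - Num.sqrt lam * y (s i) * phi i + lam * phi i) ^+ 2).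
Proof.
pose h i := phi i * phi i - Num.sqrt lam * y (s i).
pose g i := phi i * h i + lam * phi i.
set P0 := blkperm R d0 s; set P2 := blkperm R d2 s.
have res : residual lam y (diagW phi s).1 (diagW phi s).2 = P2^T *m rdiag d2 d0 h *m P0.
  rewrite /residual /Ymat rdiagB mulmxBr mulmxBl.
  rewrite (rdiag_perm_conj s (fun i => Num.sqrt lam * y i) n_le_d2 n_le_d0) rdiagZ.
  by rewrite -(@mul_rdiag R n d2 d1 d0 phi phi n_le_d1) /= !mulmxA.
have grad1 : (diagW phi s).2^T *m residual lam y (diagW phi s).1 (diagW phi s).2
    + lam *: (diagW phi s).1 = rdiag d1 d0 g *m P0.
  rewrite res /= trmx_mul trmxK tr_rdiag !mulmxA -[_ *m P2 *m P2^T]mulmxA.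
  by rewrite (blkperm_orthmx R s n_le_d2) mulmx1 mul_rdiag // scalemxAl -rdiagZ -mulmxDl -rdiagD.
have grad2 : residual lam y (diagW phi s).1 (diagW phi s).2 *m (diagW phi s).1^T
    + lam *: (diagW phi s).2 = P2^T *m rdiag d2 d1 g.
  rewrite res /= trmx_mul tr_rdiag !mulmxA -[_ *m P0 *m P0^T]mulmxA.
  rewrite (blkperm_orthmx R s n_le_d0) mulmx1 -mulmxA mul_rdiag //.
  rewrite scalemxAr -rdiagZ -mulmxDr -rdiagD.
  by congr (_ *m rdiag _ _ _); apply: funext => i; rewrite /g; ring.
rewrite (surjective_pairing (diagW phi s)) gradnormG_residual grad1 grad2.
rewrite frob2_mulmx_blkperm // frob2_tr_blkperm_mulmx //.
rewrite !frob2_rdiag // mulr_sumr; congr Num.sqrt.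
rewrite -mulrDl mulr_sumr; apply: eq_bigr => i _; rewrite /g /h; ring.
Qed.

End DiagonalPoints.

Section Distance.
Variable R : realType.
Variables (m0 m1 m2 : nat).
Implicit Types (W V : 'M[R]_(m1, m0) * 'M[R]_(m2, m1)) (S : set ('M[R]_(m1, m0) * 'M[R]_(m2, m1))).

Lemma distW_le W V S : S V ->
  distW W S <= Num.sqrt (frob2 (W.1 - V.1) + frob2 (W.2 - V.2)).
Proof.
move=> SV; apply: ge_inf; last by exists V.
by exists 0 => _ [U _ <-]; apply: sqrtr_ge0.
Qed.

Lemma distW_ge_norm_gap W S (c tau : R) :
  S !=set0 -> (forall V, S V -> frob2 V.1 = c) -> frob2 W.1 = c + tau -> 0 <= tau ->
  Num.sqrt (tau ^+ 2 / (2 * tau + 4 * (c + 1))) <= distW W S.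
Proof.
move=> [V0 SV0] normS normW tau_ge0.
have c_ge0 : 0 <= c by rewrite -(normS _ SV0) frob2_ge0.
apply: lb_le_inf => [|_ [V SV <-]].
  by exists (Num.sqrt (frob2 (W.1 - V0.1) + frob2 (W.2 - V0.2))), V0.
apply: ler_wsqrtr; have := frob2_norm_gap (B := V.1) (D := W.1 - V.1) (tau := tau).
rewrite [V.1 + _]addrC subrK normW !normS // => /(_ erefl tau_ge0) gap.
rewrite ler_pdivrMr; last by lra.
by have := frob2_ge0 (W.2 - V.2); nra.
Qed.

End Distance.

Lemma sortdesc_perm (R : realType) n (a : 'I_n -> R) :
  exists s : 'S_n, forall i, sortdesc a i = a (s i).
Proof.
set t := [tuple a i | i < n].
have /tuple_permP [s sE] : perm_eq (sort (fun x y : R => y <= x) t) t.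
  by rewrite perm_sort perm_refl.
by exists s => i; rewrite /sortdesc -/(val t) sE -tnth_nth !tnth_mktuple.
Qed.

Lemma inA_eq0_at_resonance (R : realType) n lam (y a : 'I_n -> R) i :
  inA lam y a -> 0 < y i -> lam = y i ^+ 2 -> a i = 0.
Proof.
move=> aA y_gt0 lamE; have [cubic _] := aA i.
rewrite lamE sqrtr_sqr ger0_norm ?ltW // in cubic.
have : a i ^+ 3 = 0 by rewrite -[RHS]cubic; ring.
by move/eqP; rewrite expf_eq0 => /andP[_ /eqP].
Qed.

Lemma exists_small_param (R : realType) (a eps : R) : 0 < eps ->
  exists t : R, [/\ 0 < t, t <= 1, 2 * t ^+ 2 <= eps ^+ 2 & a * t ^+ 2 < 1].
Proof.
move=> eps_gt0; have a1_gt0 : 0 < `|a| + 1 by rewrite ltr_wpDl.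
exists (Num.min (Num.min 1 (eps / 2)) (`|a| + 1)^-1).
set t := Num.min _ _.
have t_gt0 : 0 < t by rewrite !lt_min ltr01 divr_gt0 // invr_gt0.
have t_le1 : t <= 1 by rewrite !ge_min lexx.
have t_eps : t <= eps / 2 by rewrite !ge_min lexx orbT.
have t_a : t * (`|a| + 1) <= 1.
  by rewrite -ler_pdivlMr // div1r ge_min lexx orbT.
have a_le : a <= `|a| := ler_norm a.
split => //; nra.
Qed.

Lemma cubic_rate_lt_quadratic_rate (R : realType) (u c kappa : R) :
  0 < u -> u <= 1 -> 0 <= c -> 0 < kappa -> 8 * kappa ^+ 2 * (4 * c + 6) * u < 1 ->
  kappa * Num.sqrt (8 * u ^+ 3) < Num.sqrt (u ^+ 2 / (2 * u + 4 * (c + 1))).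
Proof.
move=> u_gt0 u_le1 c_ge0 kappa_gt0 small.
have -> : kappa * Num.sqrt (8 * u ^+ 3) = Num.sqrt (kappa ^+ 2 * (8 * u ^+ 3)).
  by rewrite [RHS]sqrtrM ?sqr_ge0 // sqrtr_sqr gtr0_norm.
rewrite ltr_sqrt ?divr_gt0 ?exprn_gt0 //; last by lra.
rewrite ltr_pdivlMr; last by lra.
have slack : 0 <= kappa ^+ 2 * u ^+ 3 * (1 - u).
  by rewrite !mulr_ge0 ?sqr_ge0 ?exprn_ge0 ?subr_ge0 // ltW.
have : u ^+ 2 * (8 * kappa ^+ 2 * (4 * c + 6) * u) < u ^+ 2.
  by rewrite -[X in _ < X]mulr1 ltr_pM2l // exprn_gt0.
nra.
Qed.

Section Resonance.
Variable R : realType.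
Variables (d0 d1 d2 : nat) (lam : R) (y sigma : 'I_(minn d0 d2) -> R).
Variables (s : 'S_(minn d0 d2)) (r : 'I_(minn d0 d2)).
Hypothesis n_le_d1 : (minn d0 d2 <= d1)%N.
Hypothesis sigmaA : inA lam y sigma.
Hypothesis sortE : sortdesc sigma = (fun i => sigma (s i)).
Hypothesis y_gt0 : 0 < y (s r).
Hypothesis lamE : lam = y (s r) ^+ 2.

Local Notation S := (What (d1 := d1) lam y sigma).
Local Notation c := (\sum_i sigma (s i) ^+ 2).

Definition bump (t : R) : 'I_(minn d0 d2) -> R := fun i => sigma (s i) + (i == r)%:R * t.

Let sigma_r : sigma (s r) = 0.
Proof. exact: inA_eq0_at_resonance sigmaA y_gt0 lamE. Qed.

Let S_sorted : S (diagW d1 (fun i => sigma (s i)) s).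
Proof. by rewrite /What sortE; exact: diagW_in_Wset. Qed.

Lemma distW_bump_le t e : 0 <= e -> 2 * t ^+ 2 <= e ^+ 2 -> distW (diagW d1 (bump t) s) S <= e.
Proof.
move=> e_ge0 te; apply: le_trans (distW_le _ S_sorted) _.
rewrite frob2_diagW_sub // (big_only1 (P := xpredT) r) // => [|i /negbTE ir _]; last first.
  by rewrite /bump ir mul0r addr0 subrr expr0n.
rewrite /bump eqxx mul1r addrAC subrr add0r.
by rewrite -[X in _ <= X](@ger0_norm _ e) // -sqrtr_sqr ler_sqrt ?sqr_ge0.
Qed.

Lemma distW_bump_ge t :
  Num.sqrt ((t ^+ 2) ^+ 2 / (2 * t ^+ 2 + 4 * (c + 1))) <= distW (diagW d1 (bump t) s) S.
Proof.
apply: distW_ge_norm_gap; [by exists (diagW d1 (fun i => sigma (s i)) s)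
  | by move=> V; rewrite /What sortE => /Wset_frob2_fst -> | | exact: sqr_ge0].
rewrite frob2_diagW_fst // (bigD1 r) //= [X in _ = X + _](bigD1 r) //=.
rewrite /bump eqxx sigma_r mul1r add0r expr0n add0r addrC; congr (_ + _).
by apply: eq_bigr => i /negbTE ->; rewrite mul0r addr0.
Qed.

Lemma gradnormG_bump t : gradnormG lam y (diagW d1 (bump t) s) = Num.sqrt (8 * (t ^+ 2) ^+ 3).
Proof.
rewrite gradnormG_diagW // (big_only1 (P := xpredT) r) // => [|i /negbTE ir _]; last first.
  by have [cubic _] := sigmaA (s i); rewrite /bump ir mul0r addr0 cubic expr0n.
rewrite /bump eqxx sigma_r mul1r add0r lamE sqrtr_sqr gtr0_norm //.
by congr (Num.sqrt _); ring.
Qed.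

End Resonance.

Theorem lemmaA1 (R : realType) (d0 d1 d2 : nat) (lam : R)
  (y : 'I_(minn d0 d2) -> R) :
  0 < lam ->
  (forall i j : 'I_(minn d0 d2), (val i <= val j)%N -> y j <= y i) ->
  (forall i : 'I_(minn d0 d2), 0 <= y i) ->
  (minn d0 d2 <= d1)%N ->
  (exists i : 'I_(minn d0 d2), 0 < y i /\ lam = y i ^+ 2) ->
  forall sigma : 'I_(minn d0 d2) -> R, inA lam y sigma ->
  ~ (exists eps kappa : R, 0 < eps /\ 0 < kappa /\
       forall W : 'M[R]_(d1, d0) * 'M[R]_(d2, d1),
         distW W (What (d1 := d1) lam y sigma) <= eps ->
         distW W (What (d1 := d1) lam y sigma) <= kappa * gradnormG lam y W).
Proof.
move=> _ _ _ n_le_d1 [i0 [y_gt0 lamE]] sigma sigmaA [eps [kappa [eps_gt0 [kappa_gt0 bound]]]].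
have [s /funext sortE] := sortdesc_perm sigma.
pose r := (s^-1)%g i0.
have y_r_gt0 : 0 < y (s r) by rewrite permKV.
have lam_r : lam = y (s r) ^+ 2 by rewrite permKV.
pose c := \sum_i sigma (s i) ^+ 2.
have c_ge0 : 0 <= c by apply: sumr_ge0 => i _; apply: sqr_ge0.
have [t [t_gt0 t_le1 t_eps t_small]] := exists_small_param (8 * kappa ^+ 2 * (4 * c + 6)) eps_gt0.
pose W := diagW d1 (bump sigma s r t) s.
have near : distW W (What (d1 := d1) lam y sigma) <= eps.
  by apply: distW_bump_le => //; apply: ltW.
have := le_trans (distW_bump_ge n_le_d1 sigmaA sortE y_r_gt0 lam_r t) (bound W near).
rewrite gradnormG_bump // leNgt => /negP; apply.
by apply: cubic_rate_lt_quadratic_rate; rewrite ?exprn_gt0 ?expr_le1 // ltW.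
Qed.
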